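(* Let $\mathcal{B}$ be a $\sigma$-algebra on a nonempty set $E$ and let $\nu$ be a $\sigma$-principal $\sigma$-maxitive measure on $\mathcal{B}$. Then $\nu$ is autocontinuous. Moreover, if the empty set is the only $\nu$-negligible subset of $E$, then $\nu$ is completely maxitive and has a cardinal density (a map $c:E\to[0,\infty]$ with $\nu(B)=\sup_{x\in B}c(x)$ for all $B\in\mathcal{B}$).
   Context: A $\sigma$-maxitive measure on $\mathcal{B}$ is a map $\nu:\mathcal{B}\to[0,\infty]$ with $\nu(\emptyset)=0$, $\nu(B\cup B')=\max(\nu(B),\nu(B'))$, and $\nu(\bigcup_nB_n)=\lim_n\nu(B_n)$ for nondecreasing sequences in $\mathcal{B}$. It is completely maxitive if $\nu(\bigcup_{j\in J}B_j)=\sup_{j\in J}\nu(B_j)$ for every arbitrary family $(B_j)_{j\in J}$ in $\mathcal{B}$ with $\bigcup_jB_j\in\mathcal{B}$. A subset $N\subset E$ is $\nu$-negligible if $N\subset G$ for some $G\in\mathcal{B}$ with $\nu(G)=0$. A $\sigma$-ideal of $\mathcal{B}$ is a nonempty $\mathcal{I}\subset\mathcal{B}$ closed under countable unions and under taking subsets belonging to $\mathcal{B}$; $\nu$ is $\sigma$-principal if for every $\sigma$-ideal $\mathcal{I}$ there is $L\in\mathcal{I}$ with $S\setminus L$ $\nu$-negligible for all $S\in\mathcal{I}$. $\nu$ is autocontinuous if there is a $\mathcal{B}$-measurable $f:E\to[0,\infty]$ (i.e. $\{f>t\}\in\mathcal{B}$ for all $t\ge0$) with $\nu(B)=\inf\{t>0:B\cap\{f>t\}\text{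 is }\nu\text{-negligible}\}$ for all $B\in\mathcal{B}$. *)

From HB Require Import structures.
From mathcomp Require Import all_boot all_order all_algebra.
From mathcomp Require Import all_classical all_reals all_analysis.
Set Implicit Arguments. Unset Strict Implicit. Unset Printing Implicit Defensive.
Import Order.TTheory GRing.Theory Num.Theory.
Local Open Scope classical_set_scope.
Local Open Scope ring_scope.
Local Open Scope ereal_scope.

Section Maxitive.
Context (d : measure_display) (T : measurableType d) (R : realType).
Implicit Types (nu : set T -> \bar R).

(* Supremum in [0, +oo]: the supremum of the empty family is 0. *)
Definition sup0 (S : set (\bar R)) : \bar R := ereal_sup ([set 0] `|` S).

(* nu : B -> [0,oo], sigma-maxitive; only values on measurable sets matter *)
Definition sigma_maxitive nu : Prop :=
  [/\ (forall B, measurable B -> 0 <= nu B),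
      nu set0 = 0,
      (forall B B', measurable B -> measurable B' ->
         nu (B `|` B') = maxe (nu B) (nu B')) &
      (forall Bn : nat -> set T, (forall n, measurable (Bn n)) ->
         (forall n, Bn n `<=` Bn n.+1) ->
         (nu \o Bn) @ \oo --> nu (\bigcup_n Bn n))].

Definition completely_maxitive nu : Prop :=
  forall (J : Type) (Bj : J -> set T), (forall j, measurable (Bj j)) ->
    measurable (\bigcup_j Bj j) ->
    nu (\bigcup_j Bj j) = sup0 [set nu (Bj j) | j in setT].

Definition nu_negligible nu (N : set T) : Prop :=
  exists G, [/\ measurable G, nu G = 0 & N `<=` G].

Definition sigma_ideal (I : set (set T)) : Prop :=
  [/\ I !=set0,
      I `<=` measurable,
      (forall F : nat -> set T, (forall n, I (F n)) -> I (\bigcup_n F n)) &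
      (forall S S', I S -> measurable S' -> S' `<=` S -> I S')].

Definition sigma_principal nu : Prop :=
  forall I, sigma_ideal I ->
    exists2 L, I L & forall S, I S -> nu_negligible nu (S `\` L).

Definition autocontinuous nu : Prop :=
  exists f : T -> \bar R,
    [/\ (forall x, 0 <= f x),
        (forall t : R, (0 <= t)%R -> measurable [set x | t%:E < f x]) &
        (forall B, measurable B ->
           nu B = ereal_inf [set t%:E | t in
                    [set t : R | (0 < t)%R /\
                       nu_negligible nu (B `&` [set x | t%:E < f x])]])].

Definition has_cardinal_density nu : Prop :=
  exists c : T -> \bar R, (forall x, 0 <= c x) /\
    forall B, measurable B -> nu B = sup0 [set c x | x in B].

End Maxitive.

From Pilot Require Import Defs.
From HB Require Import structures.
From mathcomp Require Import all_boot all_order all_algebra.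
From mathcomp Require Import all_classical all_reals all_analysis.
Set Implicit Arguments. Unset Strict Implicit. Unset Printing Implicit Defensive.
Import Order.TTheory GRing.Theory Num.Theory.
Local Open Scope classical_set_scope.
Local Open Scope ring_scope.
Local Open Scope ereal_scope.

(** For every level [t >= 0] the measurable sets [S] with [nu S <= t] form a
    sigma-ideal; sigma-principality yields a largest element [L t] of it, up
    to negligible sets.  Doing this for the (countably many) nonnegative
    rationals and making the [L t] increasing in [t], the function
    [density x = inf {t | x \in L t}] is measurable and [nu B <= t] holds exactly
    when [B `&` [set x | t < density x]] is negligible, which is autocontinuity.
    When only the empty set is negligible this says that [nu B] is the
    supremum of [density] over [B], so it is a cardinal density, and a supremum
    of pointwise values is completely maxitive. *)

Section nonneg_rationals.
Variable R : realType.

(* An enumeration of the nonnegative rationals, with repetitions. *)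
Definition nnq (n : nat) : R := `|ratr (odflt 0%R (unpickle n))|%R.

Lemma nnq_ge0 n : (0 <= nnq n)%R.
Proof. exact: normr_ge0. Qed.

Lemma nnq_dense (t e : R) : (0 <= t)%R -> (0 < e)%R ->
  exists n, (t < nnq n < t + e)%R.
Proof.
move=> t0 e0; have [r] : exists r : rat, ratr r \in `]t, t + e[%R.
  by apply: rat_in_itvoo; rewrite ltrDl.
rewrite in_itv /= => /andP[tr re]; exists (pickle r).
by rewrite /nnq pickleK /= ger0_norm ?tr ?re// (le_trans t0 (ltW tr)).
Qed.

Lemma lee_nnq (y : \bar R) (t : R) : (0 <= t)%R ->
  (forall n, (t < nnq n)%R -> y <= (nnq n)%:E) -> y <= t%:E.
Proof.
move=> t0 yle; apply/lee_addgt0Pr => e e0.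
have [n /andP[tn ne]] := nnq_dense t0 e0.
by rewrite (le_trans (yle n tn))// -EFinD lee_fin ltW.
Qed.

Lemma ereal_inf_pos_levels (y : \bar R) (P : R -> Prop) : 0 <= y ->
  (forall t, (0 < t)%R -> P t -> y <= t%:E) ->
  (forall n, y < (nnq n)%:E -> P (nnq n)) ->
  ereal_inf [set t%:E | t in [set t : R | (0 < t)%R /\ P t]] = y.
Proof.
move=> y0 Ple Pnnq; apply/eqP; rewrite eq_le; apply/andP; split; last first.
  by apply: le_ereal_inf_tmp => _ [t [t0 Pt] <-]; exact: Ple.
case: y y0 Pnnq {Ple} => [r| |] //=; rewrite ?lee_fin => r0 Pnnq; last by rewrite leey.
apply/lee_addgt0Pr => e e0; have [n /andP[rn ne]] := nnq_dense r0 e0.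
apply: (@le_trans _ _ (nnq n)%:E); last by rewrite -EFinD lee_fin ltW.
apply: ereal_inf_lbound; exists (nnq n) => //; split.
  by rewrite (le_lt_trans r0 rn).
by apply: Pnnq; rewrite lte_fin.
Qed.

End nonneg_rationals.

Section sigma_maxitive_sublevel.
Context (d : measure_display) (T : measurableType d) (R : realType).
Variables (nu : set T -> \bar R) (nuM : sigma_maxitive nu).

Definition sublevel (t : R) : set (set T) :=
  [set S | measurable S /\ nu S <= t%:E].

Lemma sigma_maxitive_ge0 B : measurable B -> 0 <= nu B.
Proof. by case: nuM => + _ _ _; apply. Qed.

Lemma sigma_maxitive0 : nu set0 = 0.
Proof. by case: nuM. Qed.

Lemma sigma_maxitiveU A B : measurable A -> measurable B ->
  nu (A `|` B) = maxe (nu A) (nu B).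
Proof. by case: nuM => _ _ + _; apply. Qed.

Lemma sublevel0 t : (0 <= t)%R -> sublevel t set0.
Proof. by move=> t0; split => //; rewrite sigma_maxitive0 lee_fin. Qed.

Lemma sigma_maxitive_le A B :
  measurable A -> measurable B -> A `<=` B -> nu A <= nu B.
Proof.
move=> mA mB AB.
by rewrite -((setUidPr _ _).2 AB) sigma_maxitiveU// le_max lexx.
Qed.

Lemma sublevel_bigsetU t (F : nat -> set T) n : (0 <= t)%R ->
  (forall k, sublevel t (F k)) -> sublevel t (\big[setU/set0]_(k < n) F k).
Proof.
move=> t0 Ft; elim: n => [|n [mU nuUt]].
  by rewrite big_ord0; exact: sublevel0.
have [mF nuFt] := Ft n; rewrite big_ord_recr /=.
by split; [exact: measurableU | rewrite sigma_maxitiveU// ge_max nuUt nuFt].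
Qed.

(* A countable union is the increasing union of its finite partial unions. *)
Lemma sublevel_bigcup t (F : nat -> set T) : (0 <= t)%R ->
  (forall n, sublevel t (F n)) -> sublevel t (\bigcup_n F n).
Proof.
move=> t0 Ft; case: nuM => _ _ _ nu_cvg.
have partialF n := sublevel_bigsetU n.+1 t0 Ft.
rewrite -bigcup_bigsetU_bigcup; split.
  by apply: bigcup_measurable => n _; exact: (partialF n).1.
apply: (cvge_to_le (nu_cvg _ (fun n => (partialF n).1) _)).
  by move=> n; apply: subset_bigsetU.
by apply: nearW => n; exact: (partialF n).2.
Qed.

Lemma sublevel_sigma_ideal t : (0 <= t)%R -> sigma_ideal (sublevel t).
Proof.
move=> t0; split.
- by exists set0; exact: sublevel0.
- by move=> S [].
- by move=> F; exact: sublevel_bigcup.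
- move=> S S' [mS nuS] mS' S'S; split => //.
  exact: le_trans (sigma_maxitive_le mS' mS S'S) nuS.
Qed.

Lemma sublevel_bigcup_cond t (P : set nat) (F : nat -> set T) : (0 <= t)%R ->
  (forall n, P n -> sublevel t (F n)) -> sublevel t (\bigcup_(n in P) F n).
Proof.
move=> t0 Ft; rewrite bigcup_mkcond; apply: sublevel_bigcup => // n.
by case: ifPn => [/set_mem /Ft //|_]; exact: sublevel0.
Qed.

End sigma_maxitive_sublevel.

Section cardinal_density.
Context (d : measure_display) (T : measurableType d) (R : realType).
Variables (nu : set T -> \bar R) (c : T -> \bar R).
Hypothesis nu_sup : forall B, measurable B -> nu B = Defs.sup0 [set c x | x in B].

Lemma cardinal_density_completely_maxitive : completely_maxitive nu.
Proof.
move=> J B mB mU; rewrite nu_sup//; apply/eqP; rewrite eq_le; apply/andP; split.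
- apply: ge_ereal_sup => _ [->|[x [j _ Bjx] <-]].
    by apply: ereal_sup_ubound; left.
  apply: (@le_trans _ _ (nu (B j))); last by apply: ereal_sup_ubound; right; exists j.
  by rewrite nu_sup//; apply: ereal_sup_ubound; right; exists x.
- apply: ge_ereal_sup => _ [->|[j _ <-]]; first by apply: ereal_sup_ubound; left.
  rewrite nu_sup//; apply: ereal_sup_le => _ [->|[x Bjx <-]]; first by left.
  by right; exists x => //; exists j.
Qed.

End cardinal_density.

Section sigma_principal_autocontinuous.
Context (d : measure_display) (T : measurableType d) (R : realType).
Variables (nu : set T -> \bar R) (nuM : sigma_maxitive nu).
Hypothesis nuP : sigma_principal nu.

Local Notation nnq := (@nnq R).
Local Notation sublevel := (sublevel nu).

Lemma sublevel_principal n : exists L, sublevel (nnq n) L /\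
  forall S, sublevel (nnq n) S -> nu_negligible nu (S `\` L).
Proof. by have [L ? ?] := nuP (sublevel_sigma_ideal nuM (nnq_ge0 R n)); exists L. Qed.

Definition L n := projT1 (choice sublevel_principal) n.

Lemma LP n : sublevel (nnq n) (L n) /\
  forall S, sublevel (nnq n) S -> nu_negligible nu (S `\` L n).
Proof. exact: (projT2 (choice sublevel_principal) n). Qed.

Definition M n := \bigcup_(k in [set k | (nnq k <= nnq n)%R]) L k.

Lemma M_sublevel n : sublevel (nnq n) (M n).
Proof.
apply: (sublevel_bigcup_cond nuM (nnq_ge0 R n)) => k /= kn.
have [[mL nuL] _] := LP k; split => //.
by rewrite (le_trans nuL)// lee_fin.
Qed.

Lemma M_measurable n : measurable (M n).
Proof. exact: (M_sublevel n).1. Qed.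

Lemma M_mono n m : (nnq n <= nnq m)%R -> M n `<=` M m.
Proof. by move=> nm x [k kn Lkx]; exists k => //; exact: le_trans kn nm. Qed.

Lemma L_sub_M n : L n `<=` M n.
Proof. by move=> x Lx; exists n => /=. Qed.

Definition density x := ereal_inf [set (nnq n)%:E | n in [set n | M n x]].

Lemma density_ge0 x : 0 <= density x.
Proof. by apply: le_ereal_inf_tmp => _ [n _ <-]; rewrite lee_fin nnq_ge0. Qed.

Lemma density_le_M n x : M n x -> density x <= (nnq n)%:E.
Proof. by move=> Mx; apply: ereal_inf_lbound; exists n. Qed.

Lemma density_leP x t : (0 <= t)%R ->
  density x <= t%:E <-> forall n, (t < nnq n)%R -> M n x.
Proof.
move=> t0; split => [fxt n tn|Mx]; last first.
  by apply: lee_nnq t0 _ => n tn; exact: density_le_M (Mx n tn).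
have /ereal_inf_lt[_ [m Mmx <-]] : density x < (nnq n)%:E.
  by rewrite (le_lt_trans fxt)// lte_fin.
by rewrite lte_fin => mn; exact: M_mono (ltW mn) _ Mmx.
Qed.

Lemma density_gt_measurable t : (0 <= t)%R -> measurable [set x | t%:E < density x].
Proof.
move=> t0.
have -> : [set x | t%:E < density x] = ~` \bigcap_(n in [set n | (t < nnq n)%R]) M n.
  apply/seteqP; split => x /=.
    by rewrite ltNge => /negP fxt Mx; apply: fxt; exact/(density_leP x t0).
  by move=> Mx; rewrite ltNge; apply/negP => /(density_leP x t0).
apply/measurableC/bigcap_measurable => [|n _]; last exact: M_measurable.
by have [n /andP[tn _]] := nnq_dense t0 (@ltr01 R); exists n.
Qed.

Lemma density_le_measurable t : (0 <= t)%R -> measurable [set x | density x <= t%:E].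
Proof.
move=> t0; have -> : [set x | density x <= t%:E] = ~` [set x | t%:E < density x].
  by apply/seteqP; split => x /=; rewrite leNgt => /negP.
exact/measurableC/density_gt_measurable.
Qed.

Lemma nu_density_le B t : measurable B -> (0 <= t)%R ->
  nu (B `&` [set x | density x <= t%:E]) <= t%:E.
Proof.
move=> mB t0; have mC := measurableI _ _ mB (density_le_measurable t0).
apply: (lee_nnq t0) => n tn.
apply: le_trans (sigma_maxitive_le nuM mC (M_measurable n) _) (M_sublevel n).2.
by move=> x [_ /(density_leP x t0)]; apply.
Qed.

Lemma nu_le_of_negligible B t : measurable B -> (0 < t)%R ->
  nu_negligible nu (B `&` [set x | t%:E < density x]) -> nu B <= t%:E.
Proof.
move=> mB t0 [G [mG nuG0 BG]]; have t0' := ltW t0.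
have mC := measurableI _ _ mB (density_le_measurable t0').
have BGC : B `<=` G `|` (B `&` [set x | density x <= t%:E]).
  move=> x Bx; have [fxt|] := ltP t%:E (density x); first by left; exact: BG.
  by right.
apply: le_trans (sigma_maxitive_le nuM mB (measurableU _ _ mG mC) BGC) _.
rewrite sigma_maxitiveU// nuG0 ge_max lee_fin t0'.
exact: nu_density_le.
Qed.

Lemma negligible_of_nu_le B n : measurable B -> nu B <= (nnq n)%:E ->
  nu_negligible nu (B `&` [set x | (nnq n)%:E < density x]).
Proof.
move=> mB nuB; have [G [mG nuG0 BLG]] := (LP n).2 B (conj mB nuB).
exists G; split => // x [Bx fx]; apply: BLG; split => // /L_sub_M/density_le_M.
by rewrite leNgt fx.
Qed.

Lemma nu_autocontinuous_formula B : measurable B ->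
  nu B = ereal_inf [set t%:E | t in [set t : R | (0 < t)%R /\
           nu_negligible nu (B `&` [set x | t%:E < density x])]].
Proof.
move=> mB; apply/esym/ereal_inf_pos_levels.
- exact: sigma_maxitive_ge0.
- by move=> t t0; exact: nu_le_of_negligible.
- by move=> n /ltW; exact: negligible_of_nu_le.
Qed.

Lemma sigma_principal_autocontinuous : autocontinuous nu.
Proof.
exists density; split; [exact: density_ge0 | exact: density_gt_measurable |].
exact: nu_autocontinuous_formula.
Qed.

Hypothesis negligible_empty : forall N, nu_negligible nu N -> N = set0.

Lemma nu_sup_density B : measurable B -> nu B = Defs.sup0 [set density x | x in B].
Proof.
move=> mB; set s := Defs.sup0 _.
have s0 : 0 <= s by apply: ereal_sup_ubound; left.
have negligibleE t : (0 < t)%R ->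
    nu_negligible nu (B `&` [set x | t%:E < density x]) <-> s <= t%:E.
  move=> t0; split => [/negligible_empty Bf0|st].
    apply: ge_ereal_sup => _ [->|[x Bx <-]]; first by rewrite lee_fin ltW.
    by rewrite leNgt; apply/negP => fxt; have : set0 x by rewrite -Bf0.
  exists set0; split; [exact: measurable0 | exact: sigma_maxitive0 |].
  move=> x [Bx]; rewrite /= ltNge => /negP; apply; apply: le_trans st.
  by apply: ereal_sup_ubound; right; exists x.
rewrite nu_autocontinuous_formula//; apply: ereal_inf_pos_levels => //.
- by move=> t t0 /(negligibleE t t0).
- move=> n sn; apply/negligibleE; last exact: ltW.
  by rewrite -lte_fin; exact: le_lt_trans s0 sn.
Qed.

End sigma_principal_autocontinuous.

Theorem corollary5p7 (d : measure_display) (T : measurableType d) (R : realType)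
  (nu : set T -> \bar R) :
  (exists x : T, True) ->
  sigma_maxitive nu -> sigma_principal nu ->
  autocontinuous nu /\
  ((forall N : set T, nu_negligible nu N -> N = set0) ->
     completely_maxitive nu /\ has_cardinal_density nu).
Proof.
move=> _ nuM nuP; split; first exact: sigma_principal_autocontinuous.
move=> negligible_empty; have nu_sup := nu_sup_density nuM nuP negligible_empty.
split; first exact: cardinal_density_completely_maxitive nu_sup.
by exists (density nuM nuP); split; [exact: density_ge0 | exact: nu_sup].
Qed.
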